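(* Let $G$ be a simple undirected graph on the vertex set $[n]=\{1,\dots,n\}$, let $t$ be the number of triangles in $G$, and let $\Delta=\max_{e\in E(G)}\delta_e$, where $\delta_e$ is the number of triangles of $G$ containing the edge $e$. Let $N$ be a positive integer and $p=1/N$. Color each vertex of $G$ independently and uniformly at random with one of $N$ colors (so each vertex receives any given color with probability $p$), and let $T$ be the number of monochromatic triangles, i.e. triangles of $G$ all three of whose vertices receive the same color. If $$p \geq \max\left( \frac{\Delta \log n}{t}, \frac{\log n}{\sqrt{t}}\right),$$ then $T\sim \mathbb{E}[T]$ with probability $1-o(1)$; that is, for every constant $\epsilon>0$, $\Pr\big[|T-\mathbb{E}[T]|\geq \epsilon\,\mathbb{E}[T]\big]=o(1)$ as $n\to\infty$.
   Context: The statement is asymptotic: $G$ (and hence $t,\Delta$) and $p$ may depend on $n$, and $o(1)$ refers to $n\to\infty$. Here $\mathbb{E}[T]=p^2 t$. This random coloring is the sampling step of the ''colorful triangle sampling'' algorithm, which keeps exactly the monochromatic edges (edges whose endpoints receive the same color), counts the triangles $T$ among them, and outputs $T/p^2$ as an estimate of $t$. *)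

From HB Require Import structures.
From mathcomp Require Import all_boot all_order all_algebra.
From mathcomp Require Import reals exp.
Set Implicit Arguments. Unset Strict Implicit. Unset Printing Implicit Defensive.
Import Order.TTheory GRing.Theory Num.Theory.
Local Open Scope ring_scope.

(* A simple graph on [n] is a symmetric irreflexive relation e on 'I_n. *)

Definition triangles (n : nat) (e : rel 'I_n) : {set {set 'I_n}} :=
  [set S : {set 'I_n} | (#|S| == 3)%N &&
     [forall x in S, forall y in S, (x != y) ==> e x y]].

Definition ntri (n : nat) (e : rel 'I_n) : nat := #|triangles e|.

Definition edge_tri (n : nat) (e : rel 'I_n) (u v : 'I_n) : nat :=
  #|[set S in triangles e | (u \in S) && (v \in S)]|.

Definition maxdelta (n : nat) (e : rel 'I_n) : nat :=
  (\max_(uv : 'I_n * 'I_n | e uv.1 uv.2) edge_tri e uv.1 uv.2)%N.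

Definition monoT (n N : nat) (e : rel 'I_n) (c : {ffun 'I_n -> 'I_N}) : nat :=
  #|[set S in triangles e | [exists k : 'I_N, forall x in S, c x == k]]|.

Definition unif_prob (R : realType) (n N : nat) (P : pred {ffun 'I_n -> 'I_N}) : R :=
  (#|[set c | P c]|)%:R / (#|{ffun 'I_n -> 'I_N}|)%:R.

Definition expT (R : realType) (n N : nat) (e : rel 'I_n) : R :=
  (\sum_(c : {ffun 'I_n -> 'I_N}) (monoT e c)%:R) / (#|{ffun 'I_n -> 'I_N}|)%:R.

Definition dev_prob (R : realType) (n N : nat) (e : rel 'I_n) (eps : R) : R :=
  unif_prob R (fun c : {ffun 'I_n -> 'I_N} =>
     eps * expT R N e <= `| (monoT e c)%:R - expT R N e |).

From HB Require Import structures.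
From mathcomp Require Import all_boot all_order all_algebra.
From mathcomp Require Import reals sequences exp.
From mathcomp Require Import ring lra.
Import Order.TTheory GRing.Theory Num.Theory.
Set Implicit Arguments. Unset Strict Implicit. Unset Printing Implicit Defensive.
Local Open Scope ring_scope.

(* Write T = \sum_S X_S, where X_S indicates that the triangle S is monochromatic.
   Factorising the uniform colouring over the vertices gives
   E[X_S X_S'] = N^(1 + [S, S' disjoint]) p^|S u S'|.  Hence E[X_S] = p^2, and the
   covariance E[X_S X_S'] - p^4 vanishes unless S and S' share an edge (it is then at
   most p^3, and each S shares an edge with at most 9 Delta triangles) or S = S' (it
   is then at most p^2).  So Var T <= t (9 Delta p^3 + p^2), and Chebyshev's
   inequality with E T = t p^2 bounds the deviation probability by
   Var T / (eps t p^2)^2 <= 10 / (eps^2 ln n), which tends to 0. *)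

Lemma leq_card_bigcup (I T : finType) (P : pred I) (F : I -> {set T}) :
  (#|\bigcup_(i | P i) F i| <= \sum_(i | P i) #|F i|)%N.
Proof.
elim/big_rec2: _ => [|i m U _ leUm]; first by rewrite cards0.
by rewrite (leq_trans (leq_card_setU _ _).1) ?leq_add2l.
Qed.

Section Triangles.
Variables (n : nat) (e : rel 'I_n).
Implicit Types S : {set 'I_n}.

Lemma triangles_card S : S \in triangles e -> #|S| = 3%N.
Proof. by rewrite inE => /andP [/eqP]. Qed.

Lemma triangles_elem S : S \in triangles e -> exists x, x \in S.
Proof. by move=> /triangles_card cardS; apply/card_gt0P; rewrite cardS. Qed.

Lemma triangles_edge S u v : S \in triangles e -> u \in S -> v \in S -> u != v -> e u v.
Proof.
rewrite inE => /andP [_ /forall_inP Se] uS vS uv.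
by move: (Se u uS) => /forall_inP /(_ v vS) /implyP; apply.
Qed.

Lemma card_triangles_sharing_edge S : S \in triangles e ->
  (#|[set S' in triangles e | (1 < #|S :&: S'|)%N]| <= 9 * maxdelta e)%N.
Proof.
move=> tS; pose edge_set (uv : 'I_n * 'I_n) :=
  [set S' in triangles e | (uv.1 \in S') && (uv.2 \in S')].
have cover : [set S' in triangles e | (1 < #|S :&: S'|)%N] \subset
             \bigcup_(uv in setX S S | uv.1 != uv.2) edge_set uv.
  apply/subsetP => S'; rewrite inE => /andP [tS' /card_gt1P [u [v [uSS' vSS' uv]]]].
  rewrite !inE in uSS' vSS'; case/andP: uSS' => uS uS'; case/andP: vSS' => vS vS'.
  apply/bigcupP; exists (u, v); first by rewrite !inE uS vS.
  by rewrite /edge_set inE tS' uS' vS'.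
apply: leq_trans (subset_leq_card cover) _; apply: leq_trans (leq_card_bigcup _ _) _.
have -> : 9%N = #|setX S S| by rewrite cardsX (triangles_card tS).
rewrite -sum_nat_const big_mkcondr /=.
apply: leq_sum => -[u v]; rewrite inE /= => /andP [uS vS].
case: ifP => // uv; rewrite /maxdelta.
apply: (@leq_bigmax_cond _ (fun uv : 'I_n * 'I_n => e uv.1 uv.2)
          (fun uv => edge_tri e uv.1 uv.2) (u, v)).
exact: (triangles_edge tS uS vS uv).
Qed.

End Triangles.

Section UniformColoring.
Variables (R : realFieldType) (n N : nat).
Hypothesis N_gt0 : (0 < N)%N.
Local Notation coloring := {ffun 'I_n -> 'I_N}.
Let p : R := N%:R^-1.
Implicit Types (S : {set 'I_n}) (k : 'I_N) (c : coloring).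

Definition mean (f : coloring -> R) : R := (\sum_c f c) / #|coloring|%:R.

Lemma card_coloring_neq0 : #|coloring|%:R != 0 :> R.
Proof. by rewrite pnatr_eq0 card_ffun card_ord -lt0n expn_gt0 N_gt0. Qed.

Lemma eq_mean (f g : coloring -> R) : f =1 g -> mean f = mean g.
Proof. by move=> fg; rewrite /mean (eq_bigr _ (fun c _ => fg c)). Qed.

Lemma mean_sum (I : Type) (r : seq I) (P : pred I) (f : I -> coloring -> R) :
  mean (fun c => \sum_(i <- r | P i) f i c) = \sum_(i <- r | P i) mean (f i).
Proof. by rewrite /mean exchange_big mulr_suml. Qed.

Lemma mean_sqr_dev (f : coloring -> R) :
  mean (fun c => (f c - mean f) ^+ 2) = mean (fun c => f c ^+ 2) - mean f ^+ 2.
Proof.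
have M0 := card_coloring_neq0; rewrite /mean; set m := (\sum_c f c) / _.
rewrite [in LHS](eq_bigr (fun c => f c ^+ 2 - m *+ 2 * f c + m ^+ 2)) => [|c _];
  last by rewrite sqrrB mulrnAl mulrC.
rewrite big_split sumrB -mulr_sumr sumr_const /= /m; field; exact: M0.
Qed.

Lemma mean_prod (F : 'I_n -> 'I_N -> R) :
  mean (fun c => \prod_x F x (c x)) = \prod_x ((\sum_j F x j) / N%:R).
Proof.
rewrite /mean prodf_div prodr_const card_ord bigA_distr_bigA.
by rewrite card_ffun !card_ord natrX.
Qed.

Definition mono_at (S : {set 'I_n}) (k : 'I_N) (c : coloring) : bool :=
  [forall x in S, c x == k].

Definition mono (S : {set 'I_n}) (c : coloring) : bool := [exists k, mono_at S k c].

Lemma mono_atE S k c :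
  (mono_at S k c)%:R = \prod_x (if x \in S then (c x == k)%:R else 1) :> R.
Proof.
case: (boolP (mono_at S k c)) => [/forall_inP Sk | /forall_inPn [x xS ck]].
  by rewrite big1 // => x _; case: ifP => // /Sk ->.
by rewrite (bigD1 x) //= xS (negbTE ck) mul0r.
Qed.

Lemma mono_sum S c x0 : x0 \in S -> (mono S c)%:R = \sum_k (mono_at S k c)%:R :> R.
Proof.
move=> x0S; rewrite (bigD1 (c x0)) //= big1 ?addr0 => [|k kx0]; last first.
  apply/eqP; rewrite pnatr_eq0 eqb0; apply/forall_inPn.
  by exists x0 => //; rewrite eq_sym.
congr ((nat_of_bool _)%:R); apply/idP/idP => [/existsP [k /forall_inP Sk]|Sx0].
  by apply/forall_inP => x xS; rewrite (eqP (Sk x xS)) (eqP (Sk x0 x0S)).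
by apply/existsP; exists (c x0).
Qed.

Lemma mean_coord_mono_at2 S S' k k' x :
  (\sum_j (if x \in S then (j == k)%:R else 1) *
          (if x \in S' then (j == k')%:R else 1)) / N%:R =
  (if x \in S :|: S' then p else 1) * (if x \in S :&: S' then (k == k')%:R else 1).
Proof.
have N0 : N%:R != 0 :> R by rewrite pnatr_eq0 -lt0n.
have sum_eq (k0 : 'I_N) : \sum_j (j == k0)%:R = 1 :> R.
  by rewrite (bigD1 k0) //= eqxx big1 ?addr0 // => j /negbTE ->.
rewrite /p !inE; case: (x \in S); case: (x \in S') => /=.
- rewrite (bigD1 k) //= eqxx mul1r big1 ?addr0 => [|j /negbTE ->]; last by rewrite mul0r.
  by rewrite mulrC.
- by rewrite (eq_bigr _ (fun j _ => mulr1 _)) sum_eq mul1r mulr1.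
- by rewrite (eq_bigr _ (fun j _ => mul1r _)) sum_eq mul1r mulr1.
- by rewrite (eq_bigr _ (fun j _ => mulr1 _)) sumr_const card_ord mulr1 divff.
Qed.

Lemma mean_mono_at2 S S' k k' :
  mean (fun c => (mono_at S k c)%:R * (mono_at S' k' c)%:R) =
  p ^+ #|S :|: S'| * (k == k')%:R ^+ #|S :&: S'|.
Proof.
pose F x (j : 'I_N) : R :=
  (if x \in S then (j == k)%:R else 1) * (if x \in S' then (j == k')%:R else 1).
rewrite (eq_mean (g := fun c => \prod_x F x (c x))) => [|c]; last first.
  by rewrite !mono_atE -big_split.
rewrite mean_prod (eq_bigr _ (fun x _ => mean_coord_mono_at2 S S' k k' x)).
by rewrite big_split /= -!big_mkcond /= !prodr_const.
Qed.

Lemma mean_mono2 S S' x0 x1 : x0 \in S -> x1 \in S' ->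
  mean (fun c => (mono S c)%:R * (mono S' c)%:R) =
  (if #|S :&: S'| == 0%N then N%:R ^+ 2 else N%:R) * p ^+ #|S :|: S'|.
Proof.
move=> x0S x1S.
rewrite (eq_mean (g := fun c => \sum_k \sum_k' (mono_at S k c)%:R * (mono_at S' k' c)%:R))
  => [|c]; last first.
  rewrite (mono_sum c x0S) (mono_sum c x1S) mulr_suml.
  by apply: eq_bigr => k _; rewrite mulr_sumr.
rewrite mean_sum; under eq_bigr do rewrite mean_sum.
under eq_bigr do under eq_bigr do rewrite mean_mono_at2.
case: eqP => [->|/eqP].
  under eq_bigr do under eq_bigr do rewrite expr0 mulr1.
  by rewrite !sumr_const !card_ord -mulrnA -natrX mulr_natl mulnn.
case: #|S :&: S'| => // m _.
have diag k : \sum_k' p ^+ #|S :|: S'| * (k == k')%:R ^+ m.+1 = p ^+ #|S :|: S'|.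
  rewrite (bigD1 k) //= eqxx expr1n mulr1 big1 ?addr0 // => k' kk'.
  by rewrite eq_sym (negbTE kk') expr0n mulr0.
by under eq_bigr do rewrite diag; rewrite sumr_const card_ord mulr_natl.
Qed.

Variable e : rel 'I_n.

Lemma mean_mono_tri S : S \in triangles e -> mean (fun c => (mono S c)%:R) = p ^+ 2.
Proof.
move=> tS; have [x xS] := triangles_elem tS.
rewrite (eq_mean (g := fun c => (mono S c)%:R * (mono S c)%:R)) => [|c]; last first.
  by rewrite -natrM mulnb andbb.
rewrite (mean_mono2 xS xS) setIid setUid (triangles_card tS) /= exprS mulrA.
by rewrite mulfV ?mul1r // pnatr_eq0 -lt0n.
Qed.

Lemma cov_mono_tri_le S S' : S \in triangles e -> S' \in triangles e ->
  mean (fun c => (mono S c)%:R * (mono S' c)%:R) - p ^+ 4 <=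
  (if (1 < #|S :&: S'|)%N then p ^+ 3 else 0) + (if S == S' then p ^+ 2 else 0).
Proof.
move=> tS tS'; have [x xS] := triangles_elem tS; have [x' x'S'] := triangles_elem tS'.
have p_ge0 : 0 <= p by rewrite invr_ge0 ler0n.
have Np (i j : nat) : N%:R ^+ i * p ^+ (i + j) = p ^+ j.
  by rewrite exprD mulrA -exprMn mulfV ?expr1n ?mul1r // pnatr_eq0 -lt0n.
have ite_ge0 (b : bool) (j : nat) : 0 <= (if b then p ^+ j else 0).
  by case: b => //; apply: exprn_ge0.
have eqSS' : #|S :&: S'| = 3%N -> S == S'.
  move=> cardI; rewrite eqEcard (triangles_card tS) (triangles_card tS') leqnn andbT.
  have /eqP <- : S :&: S' == S by rewrite eqEcard subsetIl cardI (triangles_card tS).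
  exact: subsetIr.
have cardI_le3 : (#|S :&: S'| <= 3)%N.
  by rewrite -(triangles_card tS) subset_leq_card ?subsetIl.
rewrite (mean_mono2 xS x'S') cardsU (triangles_card tS) (triangles_card tS').
move: eqSS' cardI_le3; case: #|S :&: S'| => [|[|[|[|m]]]] //= eqSS' _.
- by rewrite (_ : (3 + 3 - 0 = 2 + 4)%N) // Np subrr addr_ge0.
- by rewrite -[N%:R]expr1 (_ : (3 + 3 - 1 = 1 + 4)%N) // Np subrr addr_ge0.
- rewrite -[N%:R]expr1 (_ : (3 + 3 - 2 = 1 + 3)%N) // Np.
  by rewrite ler_wpDr ?ite_ge0 // lerBlDr lerDl exprn_ge0.
- rewrite eqSS' // -[N%:R]expr1 (_ : (3 + 3 - 3 = 1 + 2)%N) // Np.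
  by rewrite lerBlDr addrC addrA lerDr addr_ge0 ?exprn_ge0.
Qed.

Lemma sum_cov_mono_tri_le S : S \in triangles e ->
  \sum_(S' in triangles e) (mean (fun c => (mono S c)%:R * (mono S' c)%:R) - p ^+ 4)
  <= (9 * maxdelta e)%:R * p ^+ 3 + p ^+ 2.
Proof.
move=> tS; apply: le_trans (ler_sum _ (fun S' tS' => cov_mono_tri_le tS tS')) _.
rewrite big_split /=; apply: lerD.
  rewrite -big_mkcondr sumr_const -[_ *+ _]mulr_natl.
  rewrite ler_wpM2r ?exprn_ge0 ?invr_ge0 ?ler0n //.
  by rewrite ler_nat -cardsE (card_triangles_sharing_edge tS).
by rewrite (bigD1 S) //= eqxx big1 ?addr0 // => S' /andP [_ /negbTE]; rewrite eq_sym => ->.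
Qed.

Lemma monoT_sum c : (monoT e c)%:R = \sum_(S in triangles e) (mono S c)%:R :> R.
Proof.
rewrite /monoT -sum1_card natr_sum big_mkcond [RHS]big_mkcond /=.
apply: eq_bigr => S _; rewrite inE /mono /mono_at.
by case: (S \in triangles e); case: [exists k, _].
Qed.

Lemma mean_monoT : mean (fun c => (monoT e c)%:R) = (ntri e)%:R * p ^+ 2.
Proof.
rewrite (eq_mean monoT_sum) mean_sum (eq_bigr _ (fun S tS => mean_mono_tri tS)).
by rewrite sumr_const mulr_natl.
Qed.

Lemma var_monoT_le :
  mean (fun c => ((monoT e c)%:R - mean (fun c => (monoT e c)%:R)) ^+ 2) <=
  (ntri e)%:R * ((9 * maxdelta e)%:R * p ^+ 3 + p ^+ 2).
Proof.
rewrite mean_sqr_dev mean_monoT.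
rewrite (eq_mean (g := fun c => \sum_(S in triangles e) \sum_(S' in triangles e)
                                 (mono S c)%:R * (mono S' c)%:R)) => [|c]; last first.
  rewrite monoT_sum expr2 mulr_suml; apply: eq_bigr => S _; exact: mulr_sumr.
rewrite mean_sum; under eq_bigr do rewrite mean_sum.
have -> : ((ntri e)%:R * p ^+ 2) ^+ 2 =
          \sum_(S in triangles e) \sum_(S' in triangles e) p ^+ 4 :> R.
  by rewrite !sumr_const -mulrnA -[in RHS]mulr_natl natrM /ntri; ring.
rewrite -sumrB /ntri -sum1_card natr_sum mulr_suml.
apply: ler_sum => S tS; rewrite mul1r -sumrB.
exact: sum_cov_mono_tri_le.
Qed.

End UniformColoring.

Lemma unif_prob_dev_le (R : realType) (n N : nat) (f : {ffun 'I_n -> 'I_N} -> R) (m a : R) :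
  0 <= a ->
  unif_prob R (fun c => a <= `|f c - m|) * a ^+ 2 <= mean (fun c => (f c - m) ^+ 2).
Proof.
move=> a_ge0; rewrite /unif_prob /mean mulrAC ler_wpM2r ?invr_ge0 ?ler0n //.
rewrite -sum1_card natr_sum mulr_suml big_mkcond /=; apply: ler_sum => c _.
rewrite inE; case: ifP => [dev|_]; last exact: sqr_ge0.
rewrite mul1r -[(f c - m) ^+ 2]real_normK ?num_real // !expr2.
exact: ler_pM.
Qed.

Lemma variance_ratio_le (R : rcfType) (t D p L : R) :
  0 < t -> 0 < p -> 1 <= L -> 0 <= D ->
  D * L / t <= p -> L / Num.sqrt t <= p ->
  L * (t * (9 * D * p ^+ 3 + p ^+ 2)) <= 10 * (t * p ^+ 2) ^+ 2.
Proof.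
move=> t_gt0 p_gt0 L_ge1 D_ge0; rewrite !ler_pdivrMr ?sqrtr_gt0 // => DL Lsqrt.
have L_ge0 : 0 <= L := le_trans ler01 L_ge1.
have Lsq : L ^+ 2 <= p ^+ 2 * t.
  by rewrite -[t](sqr_sqrtr (ltW t_gt0)) -exprMn !expr2; apply: ler_pM.
have tp3_ge0 : 0 <= t * p ^+ 3 by rewrite mulr_ge0 ?exprn_ge0 ?ltW.
have tp2_ge0 : 0 <= t * p ^+ 2 by rewrite mulr_ge0 ?exprn_ge0 ?ltW.
have edge_part : t * p ^+ 3 * (D * L) <= t * p ^+ 3 * (p * t) by rewrite ler_wpM2l.
have vertex_part : L * (t * p ^+ 2) <= L ^+ 2 * (t * p ^+ 2).
  by rewrite ler_wpM2r // expr2 ler_peMr.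
have := ler_wpM2r tp2_ge0 Lsq.
nra.
Qed.

Lemma le_of_relative_variance (R : realFieldType) (P V mu eps L delta : R) :
  0 < mu -> 0 < eps -> 0 < delta -> 0 < L ->
  P * (eps * mu) ^+ 2 <= V -> L * V <= 10 * mu ^+ 2 -> 10 / (eps ^+ 2 * delta) <= L ->
  P <= delta.
Proof.
move=> mu_gt0 eps_gt0 delta_gt0 L_gt0 PV LV.
rewrite ler_pdivrMr ?mulr_gt0 ?exprn_gt0 // => L_ge.
suff : L * (P * (eps * mu) ^+ 2) <= L * (delta * (eps * mu) ^+ 2).
  by rewrite ler_pM2l // ler_pM2r // exprn_gt0 // mulr_gt0.
apply: le_trans (ler_wpM2l (ltW L_gt0) PV) (le_trans LV _).
rewrite (_ : L * _ = L * (eps ^+ 2 * delta) * mu ^+ 2); last by ring.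
by rewrite ler_wpM2r ?sqr_ge0.
Qed.

Lemma ln_nat_eventually_ge (R : realType) (b : R) :
  exists m, forall k, (m <= k)%N -> b <= ln (k%:R : R).
Proof.
exists (Num.bound (expR b)) => k km.
have bk : expR b < k%:R.
  by apply: lt_le_trans (archi_boundP (ltW (expR_gt0 b))) _; rewrite ler_nat.
rewrite -[X in X <= _]expRK ler_ln ?posrE ?expR_gt0 ?ltW //.
exact: lt_trans (expR_gt0 b) bk.
Qed.

Lemma dev_prob_monoT_le (R : realType) (n N : nat) (e : rel 'I_n) (eps : R) :
  (0 < N)%N -> 0 <= eps ->
  dev_prob N e eps * (eps * ((ntri e)%:R * N%:R^-1 ^+ 2)) ^+ 2 <=
  (ntri e)%:R * ((9 * maxdelta e)%:R * N%:R^-1 ^+ 3 + N%:R^-1 ^+ 2).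
Proof.
move=> N_gt0 eps_ge0.
have expTE : expT R N e = mean (fun c : {ffun 'I_n -> 'I_N} => (monoT e c)%:R) by [].
rewrite -(mean_monoT _ N_gt0) -expTE /dev_prob.
apply: le_trans (unif_prob_dev_le (fun c => (monoT e c)%:R) (expT R N e) _) _.
  by rewrite expTE (mean_monoT _ N_gt0) mulr_ge0 // mulr_ge0 ?exprn_ge0 ?invr_ge0 ?ler0n.
exact: var_monoT_le.
Qed.

Theorem theorem2 (R : realType) (G : forall n : nat, rel 'I_n) (N : nat -> nat) :
  (forall n, symmetric (G n)) ->
  (forall n, irreflexive (G n)) ->
  (forall n, (0 < N n)%N) ->
  (exists n0 : nat, forall n : nat, (n0 <= n)%N ->
     (0 < ntri (G n))%N /\
     Num.max ((maxdelta (G n))%:R * ln (n%:R : R) / (ntri (G n))%:R)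
             (ln (n%:R : R) / Num.sqrt ((ntri (G n))%:R))
       <= 1 / (N n)%:R) ->
  forall eps : R, 0 < eps ->
  forall delta : R, 0 < delta ->
  exists n1 : nat, forall n : nat, (n1 <= n)%N ->
    dev_prob (N n) (G n) eps <= delta.
Proof.
(* The argument never uses that G n is symmetric or irreflexive. *)
move=> _ _ N_gt0 [n0 large_p] eps eps_gt0 delta delta_gt0.
have [m ln_large] := ln_nat_eventually_ge (Num.max 1 (10 / (eps ^+ 2 * delta)) : R).
exists (maxn n0 m) => n; rewrite geq_max => /andP [/large_p [t_gt0 p_ge] /ln_large].
rewrite ge_max => /andP [L_ge1 L_ge].
move: p_ge; rewrite ge_max mul1r => /andP [DL Lsqrt].
have p_gt0 : 0 < (N n)%:R^-1 :> R by rewrite invr_gt0 ltr0n.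
have tR_gt0 : 0 < (ntri (G n))%:R :> R by rewrite ltr0n.
have Var := variance_ratio_le tR_gt0 p_gt0 L_ge1 (ler0n _ _) DL Lsqrt.
have Cheb := dev_prob_monoT_le (G n) (N_gt0 n) (ltW eps_gt0).
rewrite natrM in Cheb.
apply: le_of_relative_variance Cheb Var L_ge => //; last exact: lt_le_trans ltr01 L_ge1.
by rewrite mulr_gt0 ?exprn_gt0.
Qed.
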